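(* For all integers $m$ and $n$, \[ F_m \sum_{k = 1}^n ( - 1)^{mk - 1} L_{2mk} = ( - 1)^{mn - 1} F_{mn} L_{mn + m}\,. \]
   Context: $F_i$ and $L_i$ denote the Fibonacci and Lucas numbers, defined for all $i\in\mathbb{Z}$ by $F_i=F_{i-1}+F_{i-2}$, $F_0=0$, $F_1=1$, and $L_i=L_{i-1}+L_{i-2}$, $L_0=2$, $L_1=1$; equivalently $F_{-i}=(-1)^{i-1}F_i$ and $L_{-i}=(-1)^iL_i$. Summation convention for an arbitrary integer upper limit: $\sum_{k=a}^{a-1} f(k)=0$, and for $n<a-1$, $\sum_{k=a}^{n} f(k) = -\sum_{k=n+1}^{a-1} f(k)$. *)

From Stdlib Require Import ZArith List Lia.
Open Scope Z_scope.

Fixpoint fibl_nat (n : nat) : Z * Z :=  (* (F_n, F_{n+1}) *)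
  match n with
  | O => (0, 1)
  | S k => let (a, b) := fibl_nat k in (b, a + b)
  end.
Definition Fn (n : nat) : Z := fst (fibl_nat n).
Definition Ln (n : nat) : Z := 2 * Fn (S n) - Fn n.  (* L_n = F_{n+1} + F_{n-1} = 2F_{n+1} - F_n *)

Definition sgnpow (j : Z) : Z := if Z.even j then 1 else -1.

(* Extension to all integers: F_{-i} = (-1)^(i-1) F_i, L_{-i} = (-1)^i L_i. *)
Definition F (i : Z) : Z :=
  if 0 <=? i then Fn (Z.to_nat i) else sgnpow (- i - 1) * Fn (Z.to_nat (- i)).
Definition L (i : Z) : Z :=
  if 0 <=? i then Ln (Z.to_nat i) else sgnpow (- i) * Ln (Z.to_nat (- i)).

Fixpoint sum_from (f : Z -> Z) (a : Z) (len : nat) : Z :=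
  match len with
  | O => 0
  | S k => f a + sum_from f (a + 1) k
  end.

(* sum_{k=a}^{n} f k with the convention: empty (=0) if n = a-1, and
   - sum_{k=n+1}^{a-1} f k if n < a - 1. *)
Definition sumZ (a n : Z) (f : Z -> Z) : Z :=
  if a - 1 <=? n then sum_from f a (Z.to_nat (n - a + 1))
  else - sum_from f (n + 1) (Z.to_nat (a - 1 - n)).

(* The product formula F_i L_j = F_(j+i) - (-1)^i F_(j-i) holds on
   all of Z, since both sides are Fibonacci-like in j and agree at j = 0, 1.
   With T_k = (-1)^(mk-1) F_((2k+1)m) it gives F_m (-1)^(mk-1) L_(2mk) =
   T_k - T_(k-1), so the sum telescopes to T_n - T_0 = T_n + F_m, and the same
   formula with i = mn, j = mn + m rewrites the right-hand side as T_n + F_m. *)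
From Stdlib Require Import ZArith Lia.
Open Scope Z_scope.

Lemma sgnpow_add x y : sgnpow (x + y) = sgnpow x * sgnpow y.
Proof. unfold sgnpow; rewrite Z.even_add; now destruct (Z.even x), (Z.even y). Qed.

Lemma sgnpow_opp x : sgnpow (- x) = sgnpow x.
Proof. unfold sgnpow; now rewrite Z.even_opp. Qed.

Lemma sgnpow_succ x : sgnpow (x + 1) = - sgnpow x.
Proof. rewrite sgnpow_add; change (sgnpow 1) with (-1); ring. Qed.

Lemma sgnpow_pred x : sgnpow (x - 1) = - sgnpow x.
Proof. rewrite <- (Z.sub_add 1 x) at 2; rewrite sgnpow_succ; ring. Qed.

Lemma sgnpow_cases x : sgnpow x = 1 \/ sgnpow x = -1.
Proof. unfold sgnpow; destruct (Z.even x); auto. Qed.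

Lemma Z_eq_by_increments (u v : Z -> Z) (n0 : Z) :
  u n0 = v n0 -> (forall n, u (n + 1) - u n = v (n + 1) - v n) ->
  forall n, u n = v n.
Proof.
  intros E0 D n.
  replace n with (n0 + (n - n0)) by ring.
  induction (n - n0) as [| x IH | x IH] using Z.peano_ind.
  - now rewrite Z.add_0_r.
  - specialize (D (n0 + x)).
    rewrite Z.add_succ_r; unfold Z.succ. lia.
  - specialize (D (n0 + Z.pred x)).
    replace (n0 + Z.pred x + 1) with (n0 + x) in D by lia. lia.
Qed.

Lemma fib_like_unique (g h : Z -> Z) :
  (forall i, g (i + 2) = g (i + 1) + g i) ->
  (forall i, h (i + 2) = h (i + 1) + h i) ->
  g 0 = h 0 -> g 1 = h 1 -> forall i, g i = h i.
Proof.
  intros Rg Rh E0 E1 i.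
  enough (P : g i = h i /\ g (i + 1) = h (i + 1)) by apply P.
  induction i as [| x [IH IH1] | x [IH IH1]] using Z.peano_ind.
  - easy.
  - rewrite <- Z.add_1_r, <- Z.add_assoc. split; [easy|].
    rewrite Rg, Rh. lia.
  - rewrite <- Z.sub_1_r, Z.sub_add. split; [|easy].
    specialize (Rg (x - 1)); specialize (Rh (x - 1)).
    replace (x - 1 + 2) with (x + 1) in Rg, Rh by ring.
    replace (x - 1 + 1) with x in Rg, Rh by ring. lia.
Qed.

Lemma Fn_SS k : Fn (S (S k)) = Fn (S k) + Fn k.
Proof. unfold Fn; simpl; destruct (fibl_nat k); simpl; ring. Qed.

Lemma F_of_nat k : F (Z.of_nat k) = Fn k.
Proof. unfold F; rewrite Nat2Z.id; destruct k; reflexivity. Qed.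

Lemma F_opp_of_nat k : F (- Z.of_nat k) = sgnpow (Z.of_nat k - 1) * Fn k.
Proof.
  destruct k as [| k]; [reflexivity|].
  unfold F; rewrite (proj2 (Z.leb_gt _ _)) by lia.
  now rewrite Z.opp_involutive, Nat2Z.id.
Qed.

Lemma F_rec i : F (i + 2) = F (i + 1) + F i.
Proof.
  destruct (Z_le_gt_dec 0 i) as [Hi | Hi].
  - destruct (Z_of_nat_complete i Hi) as [k ->].
    replace (Z.of_nat k + 2) with (Z.of_nat (S (S k))) by lia.
    replace (Z.of_nat k + 1) with (Z.of_nat (S k)) by lia.
    rewrite !F_of_nat; apply Fn_SS.
  - destruct (Z.eq_dec i (-1)) as [-> | Hi1]; [reflexivity|].
    destruct (Z_of_nat_complete (- i - 2)) as [k Hk]; [lia|].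
    replace i with (- Z.of_nat (S (S k))) by lia.
    replace (- Z.of_nat (S (S k)) + 2) with (- Z.of_nat k) by lia.
    replace (- Z.of_nat (S (S k)) + 1) with (- Z.of_nat (S k)) by lia.
    rewrite !F_opp_of_nat, Fn_SS.
    replace (Z.of_nat (S (S k)) - 1) with (Z.of_nat k - 1 + 1 + 1) by lia.
    replace (Z.of_nat (S k) - 1) with (Z.of_nat k - 1 + 1) by lia.
    rewrite !sgnpow_succ; ring.
Qed.

Lemma L_eq_F i : L i = 2 * F (i + 1) - F i.
Proof.
  destruct (Z_le_gt_dec 0 i) as [Hi | Hi].
  - destruct (Z_of_nat_complete i Hi) as [k ->].
    replace (Z.of_nat k + 1) with (Z.of_nat (S k)) by lia.
    rewrite !F_of_nat; unfold L, Ln; rewrite Nat2Z.id; now destruct k.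
  - destruct (Z_of_nat_complete (- i - 1)) as [k Hk]; [lia|].
    replace i with (- Z.of_nat (S k)) by lia.
    replace (- Z.of_nat (S k) + 1) with (- Z.of_nat k) by lia.
    rewrite !F_opp_of_nat.
    unfold L; rewrite (proj2 (Z.leb_gt _ _)) by lia.
    unfold Ln; rewrite Z.opp_involutive, Nat2Z.id, Fn_SS.
    replace (Z.of_nat (S k) - 1) with (Z.of_nat k - 1 + 1) by lia.
    replace (Z.of_nat (S k)) with (Z.of_nat k - 1 + 1 + 1) by lia.
    rewrite !sgnpow_succ; ring.
Qed.

Lemma L_rec i : L (i + 2) = L (i + 1) + L i.
Proof.
  rewrite !L_eq_F.
  replace (i + 2 + 1) with (i + 1 + 2) by ring.
  rewrite !F_rec.
  replace (i + 1 + 1) with (i + 2) by ring.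
  rewrite F_rec; ring.
Qed.

Lemma F_opp i : F (- i) = sgnpow (i + 1) * F i.
Proof.
  enough (E : forall i, sgnpow (i + 1) * F (- i) = F i).
  { rewrite <- (E i); destruct (sgnpow_cases (i + 1)) as [-> | ->]; ring. }
  apply fib_like_unique; [| exact F_rec | reflexivity | reflexivity].
  intros x.
  pose proof (F_rec (- x - 2)) as R.
  replace (- x - 2 + 2) with (- x) in R by ring.
  replace (- x - 2 + 1) with (- (x + 1)) in R by ring.
  replace (- (x + 2)) with (- x - 2) by ring.
  replace (x + 2 + 1) with (x + 1 + 1 + 1) by ring.
  rewrite !sgnpow_succ. lia.
Qed.

Lemma F_mul_L i j : F i * L j = F (j + i) - sgnpow i * F (j - i).
Proof.
  revert j; apply fib_like_unique.
  - intros j; rewrite L_rec; ring.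
  - intros j.
    replace (j + 2 + i) with (j + i + 2) by ring.
    replace (j + 2 - i) with (j - i + 2) by ring.
    replace (j + 1 + i) with (j + i + 1) by ring.
    replace (j + 1 - i) with (j - i + 1) by ring.
    rewrite !F_rec; ring.
  - change (L 0) with 2.
    rewrite Z.sub_0_l, F_opp, sgnpow_succ, Z.add_0_l.
    destruct (sgnpow_cases i) as [-> | ->]; ring.
  - change (L 1) with 1.
    replace (1 - i) with (- (i - 1)) by ring.
    rewrite F_opp, Z.sub_add.
    pose proof (F_rec (i - 1)) as R.
    replace (i - 1 + 2) with (1 + i) in R by ring.
    rewrite Z.sub_add in R.
    destruct (sgnpow_cases i) as [-> | ->]; lia.
Qed.

Lemma sum_from_last f a k : sum_from f a (S k) = sum_from f a k + f (a + Z.of_nat k).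
Proof.
  revert a; induction k as [| k IH]; intros a.
  - simpl; rewrite !Z.add_0_r; ring.
  - change (sum_from f a (S (S k))) with (f a + sum_from f (a + 1) (S k)).
    rewrite IH; simpl.
    replace (a + 1 + Z.of_nat k) with (a + Z.pos (Pos.of_succ_nat k)) by lia.
    ring.
Qed.

Lemma sumZ_succ a n f : sumZ a (n + 1) f = sumZ a n f + f (n + 1).
Proof.
  unfold sumZ.
  destruct (Z.leb_spec (a - 1) n) as [H | H].
  - rewrite (proj2 (Z.leb_le _ _)) by lia.
    replace (Z.to_nat (n + 1 - a + 1)) with (S (Z.to_nat (n - a + 1))) by lia.
    rewrite sum_from_last; do 2 f_equal; lia.
  - destruct (Z.eq_dec (n + 1) (a - 1)) as [E | E].
    + rewrite (proj2 (Z.leb_le _ _)) by lia.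
      replace (Z.to_nat (n + 1 - a + 1)) with O by lia.
      replace (Z.to_nat (a - 1 - n)) with 1%nat by lia.
      simpl; ring.
    + rewrite (proj2 (Z.leb_gt _ _)) by lia.
      replace (Z.to_nat (a - 1 - n)) with (S (Z.to_nat (a - 1 - (n + 1)))) by lia.
      simpl; ring.
Qed.

Lemma sumZ_empty a f : sumZ a (a - 1) f = 0.
Proof. unfold sumZ; rewrite Z.leb_refl; now replace (a - 1 - a + 1) with 0 by ring. Qed.

Lemma sumZ_mul_l c a n f : sumZ a n (fun k => c * f k) = c * sumZ a n f.
Proof.
  revert n; apply (Z_eq_by_increments _ _ (a - 1)).
  - rewrite !sumZ_empty; ring.
  - intros n; rewrite !sumZ_succ; ring.
Qed.

Lemma sumZ_telescope a n f (g : Z -> Z) :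
  (forall k, f k = g k - g (k - 1)) -> sumZ a n f = g n - g (a - 1).
Proof.
  intros Hf; revert n; apply (Z_eq_by_increments _ _ (a - 1)).
  - rewrite sumZ_empty; ring.
  - intros n; rewrite sumZ_succ, Hf, Z.add_simpl_r; ring.
Qed.

Theorem lemma3 (m n : Z) :
  F m * sumZ 1 n (fun k => sgnpow (m * k - 1) * L (2 * m * k))
  = sgnpow (m * n - 1) * F (m * n) * L (m * n + m).
Proof.
  set (T := fun k => sgnpow (m * k - 1) * F (2 * m * k + m)).
  rewrite <- sumZ_mul_l, (sumZ_telescope _ _ _ T).
  - unfold T; rewrite <- (Z.mul_assoc (sgnpow (m * n - 1))), F_mul_L.
    replace (m * n + m + m * n) with (2 * m * n + m) by ring.
    replace (m * n + m - m * n) with m by ring.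
    replace (2 * m * (1 - 1) + m) with m by ring.
    replace (m * (1 - 1) - 1) with (-1) by ring.
    rewrite sgnpow_pred; change (sgnpow (-1)) with (-1).
    destruct (sgnpow_cases (m * n)) as [-> | ->]; ring.
  - intros k; unfold T.
    rewrite Z.mul_assoc, (Z.mul_comm (F m)), <- Z.mul_assoc, F_mul_L.
    replace (m * (k - 1) - 1) with (m * k - 1 + - m) by ring.
    replace (2 * m * (k - 1) + m) with (2 * m * k - m) by ring.
    rewrite sgnpow_add, sgnpow_opp; ring.
Qed.
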